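(* Let $f\in\mathbb F_q[X,Y]$ be a permutation group polynomial with permutation polynomial tuple $\underline\beta_f=(\beta_0,\dots,\beta_{q-1})$, and let $h$ be a permutation of $\mathbb F_q$ that intersects $\beta_i$ simply for every $i\in\{0,\dots,q-1\}$. Then $(h\beta_0,\dots,h\beta_{q-1})$ is a permutation polynomial tuple, and the LPP $g$ associated with it is a companion of $f$.
   Context: $q$ is a prime power and $\mathbb F_q=\{c_0,\dots,c_{q-1}\}$ is a fixed enumeration; $\mathfrak S_q$ is the symmetric group of permutations of $\mathbb F_q$, composed right to left, $(\sigma\tau)(x)=\sigma(\tau(x))$. Every function $\mathbb F_q^2\to\mathbb F_q$ is identified with the unique polynomial in $\mathbb F_q[X,Y]$ of degree $<q$ in each variable representing it. $f\in\mathbb F_q[X,Y]$ is a local permutation polynomial (LPP) if $x\mapsto f(x,y_0)$ and $y\mapsto f(x_0,y)$ are permutations of $\mathbb F_q$ for all $x_0,y_0\in\mathbb F_q$. A permutation polynomial tuple is $(\beta_0,\dots,\beta_{q-1})\in\mathfrak S_q^q$ such that $\beta_i^{-1}\beta_j$ has no fixed point whenever $i\ne j$. LPPs $f$ correspond bijectively to permutation polynomial tuples $\underline\beta_f=(\beta_0,\dots,\beta_{q-1})$ via $f(x,\beta_i(x))=c_i$ for all $x\in\mathbb F_q$ and all $i$. An LPP $f$ is a permutation group polynomial if $\{\beta_0,\dots,\beta_{q-1}\}$ is a subgroup of $\mathfrak S_q$. Two LPPs $f,g$ are orthogonal (companions of each other) if for every $(a,b)\in\mathbb F_q^2$ the system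 $f(X,Y)=a$, $g(X,Y)=b$ has exactly one solution in $\mathbb F_q^2$; a companion of $f$ is an LPP orthogonal to $f$. Two permutations $h_1,h_2$ of $\mathbb F_q$ intersect simply if there is exactly one $c\in\mathbb F_q$ with $h_1(c)=h_2(c)$. *)

From HB Require Import structures.
From mathcomp Require Import all_boot all_algebra all_fingroup all_field.
Set Implicit Arguments. Unset Strict Implicit. Unset Printing Implicit Defensive.

(* Functions F_q^2 -> F_q are identified with reduced polynomials; we model
   them directly as curried functions F -> F -> F. *)

Section LPP.
Variable F : finFieldType.

Definition is_LPP (f : F -> F -> F) : Prop :=
  (forall y0 : F, bijective (fun x => f x y0)) /\
  (forall x0 : F, bijective (fun y => f x0 y)).

Definition is_ppt (beta : 'I_#|F| -> {perm F}) : Prop :=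
  forall i j : 'I_#|F|, i != j -> forall x : F, ((beta i)^-1)%g (beta j x) != x.

Definition is_tuple_of (c : 'I_#|F| -> F) (f : F -> F -> F)
    (beta : 'I_#|F| -> {perm F}) : Prop :=
  forall (i : 'I_#|F|) (x : F), f x (beta i x) = c i.

Definition orthogonal (f g : F -> F -> F) : Prop :=
  forall a b : F, exists! p : F * F, f p.1 p.2 = a /\ g p.1 p.2 = b.

Definition companion (f g : F -> F -> F) : Prop := is_LPP g /\ orthogonal f g.

Definition intersect_simply (h1 h2 : {perm F}) : Prop :=
  #|[set x : F | h1 x == h2 x]| = 1%N.

(* composition h o b (right-to-left, (h b)(x) = h (b x)); mathcomp's perm
   product is left-to-right, so this is (b * h)%g. *)
Definition perm_after (h b : {perm F}) : {perm F} := (b * h)%g.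

End LPP.

From Pilot Require Import Defs.
From HB Require Import structures.
From mathcomp Require Import all_boot all_algebra all_fingroup all_field.

Set Implicit Arguments.
Unset Strict Implicit.
Unset Printing Implicit Defensive.

(* An LPP [f] is orthogonal to an LPP [g] exactly when every line
   [y = beta_i x] of [f] meets every line [y = gamma_j x] of [g] in exactly
   one point.  For [gamma_j = h beta_j], the equation [beta_i x = h (beta_j x)]
   becomes [(beta_j^-1 beta_i) y = h y] with [y = beta_j x]; since the
   [beta_k] form a group, [beta_j^-1 beta_i] is some [beta_k], which [h]
   intersects simply. *)

Section LocalPermutationPolynomials.

Variable F : finFieldType.
Local Notation I := 'I_#|F|.

Lemma LPP_injr (f : F -> F -> F) : is_LPP f -> forall x, injective (f x).
Proof. by case=> _ bij_col x; case: (bij_col x) => g fK _; apply: can_inj fK. Qed.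

Lemma is_pptP (gamma : I -> {perm F}) :
  is_ppt gamma <-> forall x, injective (fun i => gamma i x).
Proof.
split=> [ppt x i j eq_ij | col_inj i j neq_ij x].
  by apply/eqP/negPn/negP => /ppt/(_ x); rewrite -eq_ij permK eqxx.
apply/eqP => eq_x; case/eqP: neq_ij; apply: (col_inj x).
by rewrite /= -{1}eq_x permKV.
Qed.

Lemma tuple_of_ppt (c : I -> F) (f : F -> F -> F) (beta : I -> {perm F}) :
  injective c -> is_tuple_of c f beta -> is_ppt beta.
Proof.
move=> c_inj f_beta; apply/is_pptP => x i j eq_ij.
by apply: c_inj; rewrite -(f_beta i x) -(f_beta j x) eq_ij.
Qed.

Lemma perm_after_ppt (h : {perm F}) (beta : I -> {perm F}) :
  is_ppt beta -> is_ppt (fun i => perm_after h (beta i)).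
Proof.
move/is_pptP=> col_inj; apply/is_pptP => x i j.
by rewrite /perm_after !permM => /perm_inj /col_inj.
Qed.

Lemma ppt_tuple_of_LPP (c : I -> F) (gamma : I -> {perm F}) :
  injective c -> is_ppt gamma -> exists g, is_LPP g /\ is_tuple_of c g gamma.
Proof.
move=> c_inj /is_pptP col_inj.
have col_inv x : exists idx : F -> I, cancel idx (gamma^~ x).
  have [idx _ idxK] := inj_card_bij (col_inj x) (eq_leq (esym (card_ord _))).
  by exists idx.
have [idx idxK] :=
  @fin_all_exists F (fun=> F -> I) (fun x idx => cancel idx (gamma^~ x)) col_inv.
exists (fun x y => c (idx x y)); split; last first.
  by move=> i x; congr c; apply: (col_inj x); rewrite /= idxK.
split=> [y | x]; apply: injF_bij => z1 z2 /= /c_inj eq_idx.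
  by apply: (@perm_inj _ (gamma (idx z1 y))); rewrite idxK eq_idx idxK.
by rewrite -(idxK x z1) -(idxK x z2) eq_idx.
Qed.

Lemma orthogonal_tuples (c : I -> F) (f g : F -> F -> F)
    (beta gamma : I -> {perm F}) :
  bijective c -> is_LPP f -> is_LPP g ->
  is_tuple_of c f beta -> is_tuple_of c g gamma ->
  (forall i j, exists! x, beta i x = gamma j x) ->
  (* qualified: the matrix library also defines [orthogonal] *)
  Defs.orthogonal f g.
Proof.
case=> c' _ c'K f_LPP g_LPP f_beta g_gamma meet a b.
have [x0 [meet_x0 x0_uniq]] := meet (c' a) (c' b).
exists (x0, beta (c' a) x0); split=> [|[x y] /= [fxy gxy]].
  by rewrite /= f_beta meet_x0 g_gamma !c'K.
have y_beta : y = beta (c' a) x.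
  by apply: (LPP_injr f_LPP (x := x)); rewrite fxy f_beta c'K.
have y_gamma : y = gamma (c' b) x.
  by apply: (LPP_injr g_LPP (x := x)); rewrite gxy g_gamma c'K.
by rewrite y_beta (x0_uniq x) // -y_beta.
Qed.

Lemma intersect_simply_unique (h1 h2 : {perm F}) :
  intersect_simply h1 h2 -> exists! x, h1 x = h2 x.
Proof.
move/eqP/cards1P=> [x0 agree]; exists x0; split=> [|x /eqP agree_x].
  by have := set11 x0; rewrite -agree inE => /eqP.
have : x \in [set x | h1 x == h2 x] by rewrite inE.
by rewrite agree inE => /eqP.
Qed.

Lemma group_tuple_meets (beta : I -> {perm F}) (h : {perm F}) :
  group_set [set beta i | i : I] ->
  (forall i, intersect_simply h (beta i)) ->
  forall i j, exists! x, beta i x = perm_after h (beta j) x.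
Proof.
move=> beta_grp h_simple i j; pose G := Group beta_grp.
have /imsetP [k _ beta_k] : ((beta j)^-1 * beta i)%g \in G.
  by rewrite groupM ?groupV ?imset_f.
have [z [hz z_uniq]] := intersect_simply_unique (h_simple k).
exists ((beta j)^-1 z)%g; split=> [|x eq_x].
  by rewrite /perm_after permM permKV hz -beta_k permM.
apply: (@perm_inj _ (beta j)); rewrite permKV (z_uniq (beta j x)) //.
by rewrite -beta_k permM permK eq_x /perm_after permM.
Qed.

End LocalPermutationPolynomials.

Theorem lemma4p4 (F : finFieldType) (c : 'I_#|F| -> F) (hc : bijective c)
  (f : F -> F -> F) (beta : 'I_#|F| -> {perm F})
  (hf : is_LPP f) (hbeta : is_tuple_of c f beta)
  (hgrp : group_set [set beta i | i : 'I_#|F|])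
  (h : {perm F}) (hh : forall i : 'I_#|F|, intersect_simply h (beta i)) :
  is_ppt (fun i => perm_after h (beta i)) /\
  (exists g, is_LPP g /\ is_tuple_of c g (fun i => perm_after h (beta i))) /\
  (forall g, is_LPP g -> is_tuple_of c g (fun i => perm_after h (beta i)) ->
     companion f g).
Proof.
have c_inj := bij_inj hc.
have h_ppt := perm_after_ppt h (tuple_of_ppt c_inj hbeta).
split=> //; split; first exact: ppt_tuple_of_LPP.
move=> g g_LPP g_tuple; split=> //.
exact: orthogonal_tuples hc hf g_LPP hbeta g_tuple (group_tuple_meets hgrp hh).
Qed.
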